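(* Let $A,B\in\mathbb{R}_+^{n\times n}$ be circulant matrices with $\lambda(A)=\lambda(B)\ne0$ and $A\le B$. Then $$x\in\mathrm{Attr}(B)\iff B^{n^2}_{i\bullet}\otimes x=B^{n^2}_{j\bullet}\otimes x\ \text{ for all } i,j\in\{1,\dots,n\}\text{ with } i\sim_A j.$$
   Context: Max algebra on $\mathbb{R}_+$: $\oplus=\max$, ordinary product; $B^t$ max-algebraic power, $B^t_{i\bullet}$ its $i$-th row, $B^t_{i\bullet}\otimes x=\max_k(B^t)_{i,k}x_k$. $\lambda(\cdot)$: greatest max-algebraic eigenvalue (maximum cycle geometric mean). $\mathrm{Attr}(B)=\{x\in\mathbb{R}_+^n: B^{t+1}\otimes x=\lambda(B)B^t\otimes x\text{ for some }t\ge0\}$. The critical digraph $\mathcal{C}(A)$ consists of nodes and edges of the cycles of the weighted digraph of $A$ whose geometric mean equals $\lambda(A)$; $i\sim_A j$ means $i$ and $j$ lie in the same strongly connected component of $\mathcal{C}(A)$. Circulant: $A_{i,j}=a_t$ with $t\equiv j-i\pmod n$, $t\in\{0,\dots,n-1\}$. *)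

From Stdlib Require Import Reals Relations.
From mathcomp Require Import all_boot.
Set Implicit Arguments. Unset Strict Implicit. Unset Printing Implicit Defensive.

Definition mat (n : nat) := 'I_n -> 'I_n -> R.
Definition vec (n : nat) := 'I_n -> R.

Definition nonneg_mat n (A : mat n) : Prop := forall i j, Rle 0 (A i j).
Definition nonneg_vec n (x : vec n) : Prop := forall i, Rle 0 (x i).
Definition mat_le n (A B : mat n) : Prop := forall i j, Rle (A i j) (B i j).

Definition mmul n (A B : mat n) : mat n :=
  fun i j => \big[Rmax/R0]_(k < n) Rmult (A i k) (B k j).
Definition mid n : mat n := fun i j => if i == j then R1 else R0.
Fixpoint mpow n (A : mat n) (t : nat) : mat n :=
  match t with O => @mid n | S t' => mmul A (mpow A t') end.
(* (A (x) x)_i = max_k A_{i,k} x_k, i.e. A_{i.} (x) x *)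
Definition mvec n (A : mat n) (x : vec n) : vec n :=
  fun i => \big[Rmax/R0]_(k < n) Rmult (A i k) (x k).

(* A (simple) cycle of length k+1 in the digraph of A: an injective map
   c : 'I_(k+1) -> 'I_n, visiting c 0 -> c 1 -> ... -> c k -> c 0. *)
Definition cyc_weight n k (A : mat n) (c : 'I_k.+1 -> 'I_n) : R :=
  \big[Rmult/R1]_(l < k.+1) A (c l) (c (ordS l)).
Definition geom_mean (w : R) (len : nat) : R :=
  if Rlt_dec 0 w then Rpower w (/ INR len) else R0.
Definition cyc_mean n k (A : mat n) (c : 'I_k.+1 -> 'I_n) : R :=
  geom_mean (cyc_weight A c) k.+1.

(* lambda(A): maximum cycle geometric mean over all simple cycles
   (their length k+1 is at most n); 0 if there is no cycle. *)
Definition lambda n (A : mat n) : R :=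
  \big[Rmax/R0]_(k < n)
     \big[Rmax/R0]_(c : {ffun 'I_k.+1 -> 'I_n} | injectiveb c) cyc_mean A c.

Definition crit_cycle n k (A : mat n) (c : 'I_k.+1 -> 'I_n) : Prop :=
  injective c /\ cyc_mean A c = lambda A.
Definition crit_node n (A : mat n) (u : 'I_n) : Prop :=
  exists k (c : 'I_k.+1 -> 'I_n) l, crit_cycle A c /\ c l = u.
Definition crit_edge n (A : mat n) (u v : 'I_n) : Prop :=
  exists k (c : 'I_k.+1 -> 'I_n) l,
    crit_cycle A c /\ c l = u /\ c (ordS l) = v.
Definition crit_equiv n (A : mat n) (i j : 'I_n) : Prop :=
  crit_node A i /\ crit_node A j /\
  clos_refl_trans _ (crit_edge A) i j /\ clos_refl_trans _ (crit_edge A) j i.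

Definition Attr n (B : mat n) (x : vec n) : Prop :=
  nonneg_vec x /\
  exists t : nat, forall i,
    mvec (mpow B t.+1) x i = Rmult (lambda B) (mvec (mpow B t) x i).

Definition circulant n (A : mat n) : Prop :=
  exists a : nat -> R, forall i j : 'I_n,
    A i j = a ((nat_of_ord j + n - nat_of_ord i) %% n)%N.

(* Write n for the dimension and lam for lambda(A) = lambda(B) > 0.  A circulant
   matrix is invariant under simultaneous shifts of Z/n, so (B^t (x) x)_i is the
   maximum over sequences of t steps s_1 .. s_t of b_(s_1) ... b_(s_t) x_(i + sum s_k),
   which depends only on the multiset of steps.  Every entry of a circulant matrix
   is the mean of a cycle, hence at most lam, and some step t0 has weight
   b_(t0) = a_(t0) = lam.  Among n^2 steps one step occurs n times, and n equal
   steps return to the start: hence B^(m+n) (x) x = lam^n B^m (x) x once m + n >= n^2.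
   If x is in Attr(B), an iterate z = B^(n^2 + t n) (x) x is an eigenvector,
   and lam z_v <= B_uv z_v <= lam z_u along critical edges u -> v makes z, hence
   B^(n^2) (x) x, constant on the classes of ~_A.  Conversely, the step cycles
   i, i + t0, i + 2 t0, ... are critical, so if z = B^(n^2) (x) x is constant on
   classes then B (x) z >= lam z, and B^n (x) z = lam^n z forces B (x) z = lam z. *)

From Stdlib Require Import Reals Relations Lra FunctionalExtensionality.
From HB Require Import structures.
From mathcomp Require Import all_boot ssralg zmodp fingroup cyclic zify.
Set Implicit Arguments. Unset Strict Implicit. Unset Printing Implicit Defensive.
Import GRing.Theory.

Lemma Rmult_assoc_law : associative Rmult.
Proof. by move=> a b c; rewrite Rmult_assoc. Qed.
HB.instance Definition _ :=
  Monoid.isComLaw.Build R R1 Rmult Rmult_assoc_law Rmult_comm Rmult_1_l.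

Local Open Scope R_scope.

Section BigMax.
Variables (I : eqType) (r : seq I) (P : pred I) (F : I -> R).

Lemma bigmax_ge0 : 0 <= \big[Rmax/R0]_(j <- r | P j) F j.
Proof.
elim: r => [|x s IH]; first by rewrite big_nil; lra.
by rewrite big_cons; case: (P x) => //; exact: Rle_trans IH (Rmax_r _ _).
Qed.

Lemma bigmax_ge i : i \in r -> P i -> F i <= \big[Rmax/R0]_(j <- r | P j) F j.
Proof.
elim: r => [//|x s IH]; rewrite inE big_cons => /orP [/eqP -> | ins] Pi.
  by rewrite Pi; apply: Rmax_l.
by case: (P x); [apply: Rle_trans (IH ins Pi) (Rmax_r _ _) | apply: IH].
Qed.

Lemma bigmax_lub u : 0 <= u -> (forall j, P j -> F j <= u) ->
  \big[Rmax/R0]_(j <- r | P j) F j <= u.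
Proof. by move=> u0 H; apply: (big_ind (fun v => v <= u)) => // a b; apply: Rmax_lub. Qed.

Lemma bigmax_attained : \big[Rmax/R0]_(j <- r | P j) F j = 0 \/
  exists2 j, P j & \big[Rmax/R0]_(j <- r | P j) F j = F j.
Proof.
elim: r => [|x s IH]; first by left; rewrite big_nil.
rewrite big_cons; case Px: (P x) => //; rewrite /Rmax; case: Rle_dec => _ //.
by right; exists x.
Qed.

End BigMax.

Section MaxTimes.
Variable n : nat.
Implicit Types (P Q B : mat n) (x y z : vec n).

Lemma mvec_ge0 B x i : 0 <= mvec B x i.
Proof. exact: bigmax_ge0. Qed.

Lemma mvec_ge B x i k : B i k * x k <= mvec B x i.
Proof. exact: bigmax_ge _ (mem_index_enum k) isT. Qed.

Lemma mvec_lub B x i u : 0 <= u -> (forall k, B i k * x k <= u) -> mvec B x i <= u.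
Proof. by move=> u0 H; apply: bigmax_lub. Qed.

Lemma mvec_attained B x i : mvec B x i = 0 \/ exists k, mvec B x i = B i k * x k.
Proof.
have [|[k _ E]] := bigmax_attained (index_enum 'I_n) xpredT (fun k => B i k * x k).
  by left.
by right; exists k.
Qed.

Lemma mmul_ge P Q i j k : P i k * Q k j <= mmul P Q i j.
Proof. exact: bigmax_ge _ (mem_index_enum k) isT. Qed.

Lemma mmul_attained P Q i j : mmul P Q i j = 0 \/ exists k, mmul P Q i j = P i k * Q k j.
Proof.
have [|[k _ E]] := bigmax_attained (index_enum 'I_n) xpredT (fun k => P i k * Q k j).
  by left.
by right; exists k.
Qed.

Lemma mvec_mmul P Q x : nonneg_mat P -> nonneg_vec x ->
  mvec (mmul P Q) x = mvec P (mvec Q x).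
Proof.
move=> hP hx; apply: functional_extensionality => i; apply: Rle_antisym.
  apply: mvec_lub => [|k]; first exact: mvec_ge0.
  case: (mmul_attained P Q i k) => [->|[j ->]].
    by rewrite Rmult_0_l; exact: mvec_ge0.
  apply: Rle_trans (mvec_ge _ _ i j); rewrite Rmult_assoc.
  by apply: Rmult_le_compat_l; [exact: hP | exact: mvec_ge].
apply: mvec_lub => [|j]; first exact: mvec_ge0.
case: (mvec_attained Q x j) => [->|[k ->]]; first by rewrite Rmult_0_r; exact: mvec_ge0.
apply: Rle_trans (mvec_ge _ _ i k); rewrite -Rmult_assoc.
by apply: Rmult_le_compat_r; [exact: hx | exact: mmul_ge].
Qed.

Lemma mvec_mid x : nonneg_vec x -> mvec (@mid n) x = x.
Proof.
move=> hx; apply: functional_extensionality => i; apply: Rle_antisym.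
  apply: mvec_lub => [|k]; first exact: hx.
  by have := hx i; have := hx k; rewrite /mid; case: eqP => [->|_]; lra.
by apply: Rle_trans (mvec_ge _ _ i i); rewrite /mid eqxx; lra.
Qed.

Lemma mvec_mpow B x t : nonneg_mat B -> nonneg_vec x ->
  mvec (mpow B t) x = iter t (mvec B) x.
Proof.
move=> hB hx; elim: t => [|t IH] /=; first exact: mvec_mid.
by rewrite mvec_mmul // IH.
Qed.

Lemma iter_mvec_ge0 B x t : nonneg_vec x -> nonneg_vec (iter t (mvec B) x).
Proof. by case: t => [|t] hx i /=; [exact: hx | exact: mvec_ge0]. Qed.

Lemma mvec_homo B y z i : nonneg_mat B -> (forall k, y k <= z k) ->
  mvec B y i <= mvec B z i.
Proof.
move=> hB H; apply: mvec_lub => [|k]; first exact: mvec_ge0.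
by apply: Rle_trans (mvec_ge _ _ i k); apply: Rmult_le_compat_l.
Qed.

Lemma mvecZ B y c i : nonneg_mat B -> 0 <= c ->
  mvec B (fun k => c * y k) i = c * mvec B y i.
Proof.
move=> hB c0; apply: Rle_antisym.
  apply: mvec_lub => [|k]; first by apply: Rmult_le_pos => //; exact: mvec_ge0.
  rewrite -Rmult_assoc (Rmult_comm _ c) Rmult_assoc.
  by apply: Rmult_le_compat_l => //; exact: mvec_ge.
case: (mvec_attained B y i) => [->|[k ->]]; first by rewrite Rmult_0_r; exact: mvec_ge0.
by apply: Rle_trans (mvec_ge _ _ i k); lra.
Qed.

End MaxTimes.

Lemma count_mem_pigeonhole (T : finType) (s : seq T) k :
  (#|T| * k < size s)%N -> exists v, (k < count_mem v s)%N.
Proof.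
move=> lt_s; case: (boolP [exists v, k < count_mem v s]%N) => [/existsP // | ].
rewrite negb_exists => /forallP small.
suff : (size s <= #|T| * k)%N by rewrite leqNgt lt_s.
rewrite -sum1_size (partition_big id xpredT) //= -sum_nat_const.
by apply: leq_sum => v _; rewrite sum1_count leqNgt small.
Qed.

Lemma perm_nseq_count (T : eqType) (v : T) k s :
  (k <= count_mem v s)%N -> exists s', perm_eq s (nseq k v ++ s').
Proof.
elim: k => [|k IH] le_k; first by exists s.
have [s' ps] := IH (ltnW le_k).
have /perm_to_rem vs' : v \in s'.
  move: le_k; rewrite (permP ps) count_cat count_nseq /= eqxx mul1n.
  by rewrite -has_pred1 has_count -{1}[k]addn0 ltn_add2l.
exists (rem v s').
rewrite -(perm_cat2l (nseq k v)) in vs'.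
by apply: perm_trans ps (perm_trans vs' _); rewrite -cat1s perm_catCA.
Qed.

Section Circulant.
Variable N : nat.
Local Notation n := N.+1.

Definition shift_invariant (B : mat n) : Prop :=
  forall i j s : 'I_n, B (i + s)%R (j + s)%R = B i j.

Lemma val_Zp_sub (i j : 'I_n) : val (j - i)%R = ((j + n - i) %% n)%N.
Proof. by rewrite /= modnDmr addnBA // ltnW. Qed.

Lemma circulant_shift_invariant (B : mat n) : circulant B -> shift_invariant B.
Proof.
by case=> a hB i j s; rewrite !hB -!val_Zp_sub opprD addrACA subrr addr0.
Qed.

Lemma shift_invariant_step (B : mat n) : shift_invariant B ->
  forall i s, B i (i + s)%R = B 0%R s.
Proof. by move=> sB i s; rewrite -[in RHS](sB 0%R s i) add0r addrC. Qed.

Section Walks.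
Variables (B : mat n) (x : vec n).
Hypotheses (hB : nonneg_mat B) (sB : shift_invariant B) (hx : nonneg_vec x).

(* A walk from i is recorded by its sequence of steps; the step r from j to j + r
   has weight B 0 r. *)
Definition walk_weight (s : seq 'I_n) : R := \big[Rmult/R1]_(r <- s) B 0%R r.
Definition walk_end (i : 'I_n) (s : seq 'I_n) : 'I_n := (i + \sum_(r <- s) r)%R.

Lemma walk_weight_ge0 s : 0 <= walk_weight s.
Proof.
apply: (big_ind (fun v => 0 <= v)) => [|a b|r _]; first lra.
  exact: Rmult_le_pos.
exact: hB.
Qed.

Lemma walk_le_iter s i :
  walk_weight s * x (walk_end i s) <= iter (size s) (mvec B) x i.
Proof.
elim: s i => [|r s IH] i; first by rewrite /walk_weight /walk_end !big_nil addr0 /=; lra.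
rewrite /walk_weight /walk_end !big_cons addrA Rmult_assoc /=.
apply: Rle_trans (mvec_ge _ _ i (i + r)%R); rewrite shift_invariant_step //.
by apply: Rmult_le_compat_l; [apply: hB | apply: IH].
Qed.

Lemma iter_le_walk t i : exists2 s, size s = t &
  iter t (mvec B) x i <= walk_weight s * x (walk_end i s).
Proof.
have walk_ge0 s j : 0 <= walk_weight s * x (walk_end j s).
  by apply: Rmult_le_pos; [apply: walk_weight_ge0 | apply: hx].
elim: t i => [|t IH] i.
  by exists [::]; rewrite // /walk_weight /walk_end !big_nil addr0 /=; lra.
case: (mvec_attained B (iter t (mvec B) x) i) => [E0 | [k Ek]] /=.
  have [s st _] := IH i; exists (0%R :: s); first by rewrite /= st.
  by rewrite E0; apply: walk_ge0.
have [s st Hs] := IH k; exists ((k - i)%R :: s); first by rewrite /= st.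
rewrite Ek /walk_weight /walk_end !big_cons addrA subrKC -{1}(subrKC i k).
rewrite shift_invariant_step // Rmult_assoc.
by apply: Rmult_le_compat_l; [apply: hB | apply: Hs].
Qed.

Lemma walk_weight_perm s s' : perm_eq s s' -> walk_weight s = walk_weight s'.
Proof. exact: perm_big. Qed.

Lemma walk_end_perm i s s' : perm_eq s s' -> walk_end i s = walk_end i s'.
Proof. by move=> ps; rewrite /walk_end (perm_big _ ps). Qed.

Lemma walk_weight_nseq k v s :
  walk_weight (nseq k v ++ s) = B 0%R v ^ k * walk_weight s.
Proof.
elim: k => [|k IH] /=; first by rewrite Rmult_1_l.
by rewrite /walk_weight big_cons -/(walk_weight _) IH Rmult_assoc.
Qed.

Lemma walk_end_nseq i v s : walk_end i (nseq n v ++ s) = walk_end i s.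
Proof.
have shift k : walk_end i (nseq k v ++ s) = (walk_end i s + v *+ k)%R.
  elim: k => [|k IH]; first by rewrite addr0.
  by rewrite /walk_end /= big_cons addrCA -/(walk_end _ _) IH mulrS addrCA.
have vn : (v *+ n = 0)%R by apply: val_inj; rewrite Zp_mulrn /= modnMl.
by rewrite shift vn addr0.
Qed.

End Walks.

Section Periodicity.
Variables (B : mat n) (x : vec n) (lam : R) (t0 : 'I_n).
Hypotheses (hB : nonneg_mat B) (sB : shift_invariant B) (hx : nonneg_vec x).
Hypotheses (lam_max : forall s, B 0%R s <= lam) (lam_at : B 0%R t0 = lam).

Lemma iter_periodic m i : (n * n <= m + n)%N ->
  iter (m + n) (mvec B) x i = lam ^ n * iter m (mvec B) x i.
Proof.
move=> big_m; apply: Rle_antisym.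
- (* Some step v occurs n times; removing these n steps keeps the endpoint and
     loses a factor B 0 v ^ n <= lam ^ n. *)
  have [s size_s le_s] := iter_le_walk hB sB hx (m + n) i.
  have [v /perm_nseq_count [s' ps]] : exists v, (N < count_mem v s)%N.
    apply: count_mem_pigeonhole; rewrite card_ord size_s.
    by apply: leq_trans big_m; rewrite ltn_mul2l /=.
  have size_s' : size s' = m.
    by move/perm_size: ps; rewrite size_cat size_nseq size_s addnC => /addnI.
  apply: Rle_trans le_s _.
  rewrite (walk_weight_perm _ ps) (walk_end_perm _ ps) walk_weight_nseq.
  rewrite walk_end_nseq Rmult_assoc -size_s'.
  apply: Rmult_le_compat.
  + by apply: pow_le; apply: hB.
  + by apply: Rmult_le_pos; [apply: walk_weight_ge0 | apply: hx].
  + by apply: pow_incr; split; [apply: hB | apply: lam_max].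
  + exact: walk_le_iter.
- have [s size_s le_s] := iter_le_walk hB sB hx m i.
  have := walk_le_iter x hB sB (nseq n t0 ++ s) i.
  rewrite walk_weight_nseq walk_end_nseq lam_at size_cat size_nseq size_s addnC.
  rewrite Rmult_assoc.
  apply: Rle_trans; apply: Rmult_le_compat_l => //.
  by apply: pow_le; rewrite -lam_at; apply: hB.
Qed.

Lemma iter_periodic_mul m q i : (n * n <= m + n)%N ->
  iter (m + q * n) (mvec B) x i = lam ^ (q * n) * iter m (mvec B) x i.
Proof.
move=> big_m; elim: q i => [|q IH] i; first by rewrite addn0 /= Rmult_1_l.
rewrite mulSn (addnC n) addnA iter_periodic; last by lia.
by rewrite IH pow_add; ring.
Qed.

End Periodicity.
End Circulant.

Lemma size_index_enum_ord m : size (index_enum 'I_m) = m.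
Proof. by rewrite [index_enum _]unlock -enumT size_enum_ord. Qed.

Lemma bigprod_const m c : \big[Rmult/R1]_(l < m) c = c ^ m.
Proof. by rewrite big_const_ord; elim: m => //= m ->. Qed.

Section BoundedProducts.
Variables (I : eqType) (F : I -> R) (L : R).
Hypothesis F_bounded : forall i, 0 <= F i <= L.

Lemma bigprod_le_pow r : 0 <= \big[Rmult/R1]_(i <- r) F i <= L ^ size r.
Proof.
elim: r => [|x r IH]; first by rewrite big_nil /=; lra.
rewrite big_cons /=; have := F_bounded x; split; first nra.
by apply: Rmult_le_compat; lra.
Qed.

Lemma bigprod_lt_pow r i : 0 < L -> i \in r -> F i < L ->
  \big[Rmult/R1]_(j <- r) F j < L ^ size r.
Proof.
move=> lam_gt0; elim: r => [//|x r IH]; rewrite inE big_cons /=.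
have [Fx0 FxL] := F_bounded x; have [P0 PL] := bigprod_le_pow r.
have pow_gt0 : 0 < L ^ size r by apply: pow_lt.
case/orP => [/eqP -> | ir] Fi; first nra.
by have := IH ir Fi; nra.
Qed.

Lemma bigprod_eq_pow r : 0 < L -> \big[Rmult/R1]_(i <- r) F i = L ^ size r ->
  forall i, i \in r -> F i = L.
Proof.
move=> lam_gt0 E i ir; have := F_bounded i; case=> _ /Rle_lt_or_eq_dec [Fi | //].
by have := bigprod_lt_pow lam_gt0 ir Fi; lra.
Qed.

End BoundedProducts.

Lemma geom_mean_pow y len : (0 < len)%N -> 0 < y -> geom_mean (y ^ len) len = y.
Proof.
move=> len_gt0 y_gt0; rewrite /geom_mean.
case: Rlt_dec => [pos | not_pos] /=; last by case: not_pos; apply: pow_lt.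
rewrite -Rpower_pow // Rpower_mult Rinv_r ?Rpower_1 //.
by apply: not_0_INR; lia.
Qed.

Lemma geom_mean_eq_pow w len y : (0 < len)%N -> 0 < y ->
  geom_mean w len = y -> w = y ^ len.
Proof.
move=> len_gt0 y_gt0; rewrite /geom_mean; case: Rlt_dec => w_gt0 /= E; last lra.
rewrite -Rpower_pow // -E Rpower_mult Rinv_l ?Rpower_1 //.
by apply: not_0_INR; lia.
Qed.

Section Lambda.
Variables (n : nat) (A : mat n).

Lemma lambda_ge0 : 0 <= lambda A.
Proof. exact: bigmax_ge0. Qed.

Lemma cyc_mean_le_lambda k (c : 'I_k.+1 -> 'I_n) : (k < n)%N -> injective c ->
  cyc_mean A c <= lambda A.
Proof.
move=> lt_kn c_inj; pose K : 'I_n := Ordinal lt_kn.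
apply: Rle_trans _ _ _ _ (bigmax_ge (fun K : 'I_n =>
  \big[Rmax/R0]_(c : {ffun 'I_K.+1 -> 'I_n} | injectiveb c) cyc_mean A c)
  (mem_index_enum K) isT).
have -> : cyc_mean A c = cyc_mean A (finfun c).
  by congr cyc_mean; apply: functional_extensionality => l; rewrite ffunE.
apply: bigmax_ge _ (mem_index_enum _) _.
by apply/injectiveP => l1 l2; rewrite !ffunE => /c_inj.
Qed.

Lemma crit_cycle_exists : 0 < lambda A -> exists k (c : 'I_k.+1 -> 'I_n), crit_cycle A c.
Proof.
move=> lam_gt0.
have [|[K _ EK]] := bigmax_attained (index_enum 'I_n) xpredT (fun K : 'I_n =>
  \big[Rmax/R0]_(c : {ffun 'I_K.+1 -> 'I_n} | injectiveb c) cyc_mean A c).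
  by rewrite -/(lambda A); lra.
rewrite -/(lambda A) in EK.
have [E0|[c /injectiveP c_inj Ec]] := bigmax_attained (index_enum {ffun 'I_K.+1 -> 'I_n})
  (fun c => injectiveb c) (fun c => cyc_mean A c); first by rewrite E0 in EK; lra.
by exists K, c; split; rewrite // EK Ec.
Qed.

Lemma crit_cycle_equiv k (c : 'I_k.+1 -> 'I_n) : crit_cycle A c ->
  forall l l', crit_equiv A (c l) (c l').
Proof.
move=> cc.
have node l : crit_node A (c l) by exists k, c, l.
have path d l : clos_refl_trans _ (crit_edge A) (c l) (c (iter d (@ordS _) l)).
  elim: d => [|d IH]; first exact: rt_refl.
  by apply: rt_trans IH (rt_step _ _ _ _ _); exists k, c, (iter d (@ordS _) l).
have reach (l l' : 'I_k.+1) : exists d, iter d (@ordS _) l = l'.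
  have ordS_add1 (j : 'I_k.+1) : ordS j = (j + Zp1)%R.
    by apply: val_inj; rewrite /= modnDmr addn1.
  have Zp1_mulrn (j : 'I_k.+1) : (Zp1 *+ j)%R = j.
    by apply: val_inj; rewrite Zp_mulrn /= modnMml mul1n modn_small.
  exists (nat_of_ord (l' - l)%R).
  rewrite -[l' in RHS](subrKC l) -[(l' - l)%R in RHS]Zp1_mulrn.
  elim: (nat_of_ord (l' - l)%R) => [|d IH]; first by rewrite mulr0n addr0.
  by rewrite iterS IH ordS_add1 mulrSr addrA.
move=> l l'; have [d1 <-] := reach l l'; have [d2 E2] := reach (iter d1 (@ordS _) l) l.
by split; [|split; [|split]] => //; rewrite -{2}E2.
Qed.

Section EntriesBounded.
Hypotheses (hA : nonneg_mat A) (A_le_lambda : forall u v, A u v <= lambda A).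

Lemma crit_cycle_weight k (c : 'I_k.+1 -> 'I_n) l : 0 < lambda A -> crit_cycle A c ->
  A (c l) (c (ordS l)) = lambda A.
Proof.
move=> lam_gt0 [_ mean_c].
have w_c : cyc_weight A c = lambda A ^ size (index_enum 'I_k.+1).
  by rewrite size_index_enum_ord; apply: geom_mean_eq_pow mean_c.
apply: (bigprod_eq_pow _ lam_gt0 w_c (mem_index_enum l)) => j.
by split; [apply: hA | apply: A_le_lambda].
Qed.

Lemma crit_edge_weight u v : 0 < lambda A -> crit_edge A u v -> A u v = lambda A.
Proof. by move=> lam_gt0 [k [c [l [cc [<- <-]]]]]; apply: crit_cycle_weight. Qed.

End EntriesBounded.
End Lambda.

Section StepCycles.
Variables (N : nat) (A : mat N.+1).
Local Notation n := N.+1.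
Hypotheses (hA : nonneg_mat A) (sA : shift_invariant A).

(* #[t] is the additive order of t; the length is written #[t].-1.+1 to fit the
   type of cycles. *)
Definition step_cycle (i t : 'I_n) : 'I_(#[t]%g).-1.+1 -> 'I_n :=
  fun l => (i + t *+ l)%R.
Arguments step_cycle : clear implicits.

Lemma step_cycle_inj i t : injective (step_cycle i t).
Proof.
move=> l1 l2 /addrI; rewrite !Zp_mulrn -!Zp_expg => /eqP.
rewrite eq_expg_mod_order.
rewrite !modn_small ?(leq_trans (ltn_ord _)) ?prednK ?order_gt0 //.
by move/eqP/val_inj.
Qed.

Lemma step_cycle_next i t l : step_cycle i t (ordS l) = (step_cycle i t l + t)%R.
Proof.
rewrite /step_cycle /= -addrA -mulrSr !Zp_mulrn -!Zp_expg.
have mod_order m : (m %% #[t]%g.-1.+1 = m %% #[t]%g)%N by rewrite prednK ?order_gt0.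
by rewrite mod_order expg_mod_order.
Qed.

Lemma step_cycle_mean i t : 0 < A 0%R t -> cyc_mean A (step_cycle i t) = A 0%R t.
Proof.
move=> pos; rewrite /cyc_mean /cyc_weight (eq_bigr (fun=> A 0%R t)) => [|l _].
  by rewrite bigprod_const geom_mean_pow.
by rewrite step_cycle_next shift_invariant_step.
Qed.

Lemma order_le_card (t : 'I_n) : (#[t]%g <= n)%N.
Proof.
by apply: dvdn_leq => //; have := order_dvdG (in_setT t); rewrite cardsT card_ord.
Qed.

Lemma entry_le_lambda u v : A u v <= lambda A.
Proof.
rewrite -(subrKC u v) shift_invariant_step //.
set a := A _ _; case: (Rle_or_lt a 0) => [a_le0 | a_gt0].
  by have := lambda_ge0 A; lra.
rewrite /a -(step_cycle_mean u a_gt0).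
apply: cyc_mean_le_lambda; last exact: step_cycle_inj.
by rewrite prednK ?order_gt0 ?order_le_card.
Qed.

Lemma exists_crit_step : 0 < lambda A -> exists t, A 0%R t = lambda A.
Proof.
move=> lam_gt0; have [k [c cc]] := crit_cycle_exists lam_gt0.
exists (c (ordS ord0) - c ord0)%R.
rewrite -(shift_invariant_step sA (c ord0)) subrKC.
exact: (crit_cycle_weight hA entry_le_lambda _ lam_gt0 cc).
Qed.

Lemma crit_equiv_step i t : 0 < lambda A -> A 0%R t = lambda A ->
  crit_equiv A i (i + t)%R.
Proof.
move=> lam_gt0 crit_t.
have cc : crit_cycle A (step_cycle i t).
  by split; [apply: step_cycle_inj | rewrite step_cycle_mean crit_t].
have := crit_cycle_equiv cc ord0 (ordS ord0).
by rewrite step_cycle_next /step_cycle mulr0n addr0.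
Qed.

End StepCycles.

Section Eigenvectors.
Variables (n : nat) (B : mat n) (lam : R).
Hypotheses (hB : nonneg_mat B) (lam_gt0 : 0 < lam).

Definition eigenvector (z : vec n) : Prop := forall i, mvec B z i = lam * z i.
Definition supereigenvector (z : vec n) : Prop := forall i, lam * z i <= mvec B z i.

Lemma eigenvector_iter z d : eigenvector z -> eigenvector (iter d (mvec B) z).
Proof.
move=> eig_z; elim: d => // d IH i /=.
by rewrite {1}(functional_extensionality _ _ IH) mvecZ //; lra.
Qed.

Lemma supereigenvector_mvec z : supereigenvector z -> supereigenvector (mvec B z).
Proof. by move=> super_z i; rewrite -mvecZ //; [apply: mvec_homo | lra]. Qed.

Lemma supereigenvector_iter z k i : supereigenvector z ->
  lam ^ k * z i <= iter k (mvec B) z i.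
Proof.
elim: k z i => [|k IH] z i super_z; first by rewrite /=; lra.
rewrite iterSr /= (Rmult_comm lam) Rmult_assoc.
apply: Rle_trans (IH _ i (supereigenvector_mvec super_z)).
by apply: Rmult_le_compat_l; [apply: pow_le; lra | apply: super_z].
Qed.

Lemma supereigenvector_periodic z p : supereigenvector z ->
  (forall i, iter p.+1 (mvec B) z i = lam ^ p.+1 * z i) -> eigenvector z.
Proof.
move=> super_z per_z i; apply: Rle_antisym; last exact: super_z.
have pow_gt0 : 0 < lam ^ p by apply: pow_lt.
apply: (Rmult_le_reg_l (lam ^ p)) => //.
rewrite -Rmult_assoc [lam ^ p * lam]Rmult_comm tech_pow_Rmult -per_z iterSr.
exact/supereigenvector_iter/supereigenvector_mvec.
Qed.

Lemma eigenvector_edge z u v : nonneg_vec z -> eigenvector z -> lam <= B u v ->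
  z v <= z u.
Proof.
move=> hz eig_z lam_le; apply: (Rmult_le_reg_l lam) => //; rewrite -(eig_z u).
apply: Rle_trans _ _ _ _ (mvec_ge _ _ u v); apply: Rmult_le_compat_r => //; exact: hz.
Qed.

Lemma eigenvector_crit_equiv_eq (A : mat n) z : nonneg_vec z -> eigenvector z ->
  (forall u v, crit_edge A u v -> lam <= B u v) ->
  forall i j, crit_equiv A i j -> z i = z j.
Proof.
move=> hz eig_z crit_le.
have reach u v : clos_refl_trans _ (crit_edge A) u v -> z v <= z u.
  elim=> [u' v' /crit_le /(eigenvector_edge hz eig_z) // | u' | u' v' w _ ? _ ?]; lra.
by move=> i j [_ [_ [ij ji]]]; apply: Rle_antisym; apply: reach.
Qed.

End Eigenvectors.

Theorem lemma5 (n : nat) (A B : mat n)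
  (hA : nonneg_mat A) (hB : nonneg_mat B)
  (cA : circulant A) (cB : circulant B)
  (hlam : lambda A = lambda B) (hlam0 : lambda A <> R0)
  (hAB : mat_le A B) (x : vec n) (hx : nonneg_vec x) :
  Attr B x <->
  (forall i j : 'I_n, crit_equiv A i j ->
     mvec (mpow B (n ^ 2)%N) x i = mvec (mpow B (n ^ 2)%N) x j).
Proof.
case: n A B hA hB cA cB hlam hlam0 hAB x hx => [|N] A B hA hB cA cB hlam hlam0 hAB x hx.
  by split=> [_ [] // | _]; split=> //; exists 0%N => -[].
set n := N.+1.
have lam_gt0 : 0 < lambda A by have := lambda_ge0 A; lra.
have sA := circulant_shift_invariant cA; have sB := circulant_shift_invariant cB.
have [t0 At0] := exists_crit_step hA sA lam_gt0.
have B_le s : B 0%R s <= lambda A by rewrite hlam; apply: entry_le_lambda.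
have Bt0 : B 0%R t0 = lambda A.
  by apply: Rle_antisym; [apply: B_le | rewrite -At0; apply: hAB].
have per := iter_periodic hB sB hx B_le Bt0.
have per_mul := iter_periodic_mul hB sB hx B_le Bt0.
have pow_of_iter t : mvec (mpow B t) x = iter t (mvec B) x by apply: mvec_mpow.
rewrite /Attr -hlam !pow_of_iter -mulnn; split.
- move=> [_ [t eig_t]] i j ij; rewrite !pow_of_iter in eig_t.
  set M := (n * n + t * n)%N.
  have eig_M : eigenvector B (lambda A) (iter M (mvec B) x).
    by rewrite -(subnK (_ : t <= M)%N) ?iterD; [apply: eigenvector_iter eig_t | nia].
  have crit_le u v : crit_edge A u v -> lambda A <= B u v.
    by move=> e; rewrite -(crit_edge_weight hA (entry_le_lambda sA) lam_gt0 e).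
  have := eigenvector_crit_equiv_eq lam_gt0 (iter_mvec_ge0 _ _ hx) eig_M crit_le ij.
  rewrite /M !per_mul ?leq_addr // => /Rmult_eq_reg_l; apply; apply: pow_nonzero; lra.
- move=> const; split=> //; exists (n * n)%N => i; rewrite !pow_of_iter.
  set z := iter (n * n) (mvec B) x in const *.
  have super : supereigenvector B (lambda A) z.
    move=> j; rewrite -Bt0 -(shift_invariant_step sB j).
    rewrite (const _ _ (crit_equiv_step sA j lam_gt0 At0)); exact: mvec_ge.
  have per_z j : iter n (mvec B) z j = lambda A ^ n * z j.
    by rewrite -iterD addnC per ?leq_addr.
  exact: supereigenvector_periodic per_z i.
Qed.
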